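(* Let $M$ be a finite matroid having at least one circuit, and let $\ell$ be the size of its largest circuit. Then $\mathrm{bd}(M)\le\ell^2$.
   Context: For a rooted tree $T$, $\|T\|$ is its number of edges and its depth is the number of edges of a longest root-to-leaf path. A depth-decomposition of a finite matroid $M$ (rank function $r$) is a pair $(T,f)$ with $T$ a rooted tree and $f:M\to V(T)$ such that (1) $r(M)=\|T\|$ and (2) $r(X)\le\|T^*(X)\|$ for every $X\subseteq M$, where $T^*(X)$ is the union of the paths from the root to all vertices of $f(X)$. The branch-depth $\mathrm{bd}(M)$ is the minimum depth of $T$ over all depth-decompositions $(T,f)$ of $M$. *)

From mathcomp Require Import all_boot.
Set Implicit Arguments. Unset Strict Implicit. Unset Printing Implicit Defensive.

Definition is_matroid_rank (T : finType) (r : {set T} -> nat) : Prop :=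
  [/\ forall X : {set T}, r X <= #|X|,
      forall X Y : {set T}, X \subset Y -> r X <= r Y
    & forall X Y : {set T}, r (X :|: Y) + r (X :&: Y) <= r X + r Y].

Definition is_circuit (T : finType) (r : {set T} -> nat) (C : {set T}) : bool :=
  (r C < #|C|) && [forall D : {set T}, (D \proper C) ==> (r D == #|D|)].

Definition max_circuit_size (T : finType) (r : {set T} -> nat) : nat :=
  \max_(C : {set T} | is_circuit r C) #|C|.

(* A rooted tree on the finite vertex type V, given by a root and a parent
   map: parent root = root and every vertex reaches the root. The edges are
   {v, parent v} for v <> root. *)
Definition is_rooted_tree (V : finType) (root : V) (parent : V -> V) : Prop :=
  parent root = root /\ forall v : V, iter #|V| parent v = root.

Definition tree_edges (V : finType) : nat := #|V|.-1.

Definition dist_root (V : finType) (root : V) (parent : V -> V) (v : V) : nat :=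
  find (fun k => iter k parent v == root) (iota 0 #|V|.+1).

Definition tree_depth (V : finType) (root : V) (parent : V -> V) : nat :=
  \max_(v : V) dist_root root parent v.

Definition on_root_path (V : finType) (parent : V -> V) (u v : V) : bool :=
  [exists k : 'I_#|V|.+1, iter k parent v == u].

(* ||T^*(X)|| : number of edges of the union of the root-to-f(x) paths,
   i.e. the number of non-root vertices lying on such a path. *)
Definition Tstar_edges (T V : finType) (root : V) (parent : V -> V)
    (f : T -> V) (X : {set T}) : nat :=
  #|[set u : V | (u != root) && [exists x in X, on_root_path parent u (f x)]]|.

Definition is_depth_decomposition (T V : finType) (r : {set T} -> nat)
    (root : V) (parent : V -> V) (f : T -> V) : Prop :=
  [/\ is_rooted_tree root parent,
      r [set: T] = tree_edges V
    & forall X : {set T}, r X <= Tstar_edges root parent f X].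

Definition branch_depth_le (T : finType) (r : {set T} -> nat) (k : nat) : Prop :=
  exists (V : finType) (root : V) (parent : V -> V) (f : T -> V),
    is_depth_decomposition r root parent f /\ tree_depth root parent <= k.

(* Induction on the size l of a largest circuit and, for fixed l, on the rank.
   If (A, ~A) separates M into two parts of positive rank, depth-decompositions
   of M|A and M|~A hung from a common root give one of M of the same depth.
   If M is connected, let C be a largest circuit. A depth-decomposition of M/C
   hung below a path of length r(C) = |C| - 1 is one of M, so
   bd(M) <= (|C| - 1) + bd(M/C). If |C| >= 2, every circuit of M/C is smaller
   than C: those meeting C are loops, and a circuit D of M/C disjoint from C
   with |D| >= |C| is a circuit of M of size |C| skew to C; in a connected
   matroid some circuit then meets both C and D, which is impossible for two
   skew largest circuits. By induction bd(M/C) <= (|C| - 1)^2, and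
   (|C| - 1) + (|C| - 1)^2 <= l^2. If all circuits are loops, M has rank <= 1. *)

From mathcomp Require Import all_boot zify.
Set Implicit Arguments. Unset Strict Implicit. Unset Printing Implicit Defensive.

Lemma subsetU_disjoint (T : finType) (A B C : {set T}) :
  A \subset B :|: C -> [disjoint A & C] -> A \subset B.
Proof.
move=> sABC dAC; apply/subsetP => x xA.
by move/subsetP: sABC => /(_ x xA); rewrite inE (disjointFr dAC xA) orbF.
Qed.

Lemma cardsU_disjoint (T : finType) (A B : {set T}) :
  [disjoint A & B] -> #|A :|: B| = #|A| + #|B|.
Proof. by move=> dAB; apply/eqP; rewrite (leq_card_setU A B).2. Qed.

(** * Rank functions and circuits *)

Section Rank.
Variables (T : finType) (r : {set T} -> nat).
Hypothesis hr : is_matroid_rank r.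
Implicit Types (X Y A B C D W : {set T}) (x y e f : T).

Lemma rank_le_card X : r X <= #|X|.
Proof. by case: hr. Qed.

Lemma rank_mono X Y : X \subset Y -> r X <= r Y.
Proof. by case: hr => _ + _; apply. Qed.

Lemma rank_submod X Y : r (X :|: Y) + r (X :&: Y) <= r X + r Y.
Proof. by case: hr. Qed.

Lemma rank0 : r set0 = 0.
Proof. by apply/eqP; rewrite -leqn0 -(cards0 T) rank_le_card. Qed.

Lemma rankU_le X Y : r (X :|: Y) <= r X + r Y.
Proof. by have := rank_submod X Y; lia. Qed.

Lemma nullity_mono X Y : X \subset Y -> r Y + #|X| <= r X + #|Y|.
Proof.
move=> sXY; have := rankU_le X (Y :\: X); have := rank_le_card (Y :\: X).
have -> : X :|: (Y :\: X) = Y by rewrite -{1}(setIidPr sXY) setID.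
by rewrite cardsDS //; have := subset_leq_card sXY; lia.
Qed.

Lemma indep_subset X Y : Y \subset X -> r X = #|X| -> r Y = #|Y|.
Proof.
move=> sYX indX; have := nullity_mono sYX; have := rank_le_card Y; lia.
Qed.

Lemma rank_setD1 X x : r X <= (r (X :\ x)).+1.
Proof.
have := nullity_mono (subD1set X x); rewrite (cardsD1 x X).
by case: (x \in X) => /=; lia.
Qed.

Lemma basis_exists X : exists B, [/\ B \subset X, r B = #|B| & r B = r X].
Proof.
move: {2}#|X| (leqnn #|X|) => n; elim: n X => [|n IH] X.
  by rewrite leqn0 cards_eq0 => /eqP ->; exists set0; rewrite sub0set rank0 cards0.
case: (set_0Vmem X) => [-> _|[x xX] leXn]; first by exists set0; rewrite sub0set rank0 cards0.
have [|B [sB indB rB]] := IH (X :\ x); first by move: leXn; rewrite (cardsD1 x X) xX.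
have sBX : B \subset X := subset_trans sB (subD1set X x).
have [eqX|neX] := eqVneq (r (X :\ x)) (r X); first by exists B; rewrite -eqX.
have xB : x \notin B by apply/negP => /(subsetP sB); rewrite !inE eqxx.
have sxBX : x |: B \subset X by rewrite subUset sub1set xX sBX.
have UX : (X :\ x) :|: (x |: B) = X by rewrite setUCA (setUidPl sB) setD1K.
have IB : (X :\ x) :&: (x |: B) = B.
  apply/setP => y; rewrite !inE; have := subsetP sB y; rewrite !inE.
  case: eqP => [->|_] /=; first by rewrite (negbTE xB).
  by case: (y \in B) => [/(_ isT) ->|_]; rewrite ?andbF.
exists (x |: B); rewrite sxBX cardsU1 xB.
have := rank_submod (X :\ x) (x |: B); rewrite UX IB.
have := rank_le_card (x |: B); rewrite cardsU1 xB.
have := rank_mono sxBX; have := rank_mono (subD1set X x); have := rank_setD1 X x.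
by move: neX => /eqP; split; lia.
Qed.

Lemma circuitP C :
  reflect (r C < #|C| /\ forall D, D \proper C -> r D = #|D|) (is_circuit r C).
Proof.
apply: (iffP andP) => [[depC /forallP minC]|[depC minC]]; split => //.
  by move=> D ltDC; apply/eqP; have /implyP := minC D; apply.
by apply/forallP => D; apply/implyP => /minC ->.
Qed.

Lemma dependent_circuit X : r X < #|X| -> exists2 C : {set T}, C \subset X & is_circuit r C.
Proof.
move=> depX; have PX : (X \subset X) && (r X < #|X|) by rewrite subxx.
case: (@arg_minnP _ X (fun D => (D \subset X) && (r D < #|D|)) (fun D => #|D|) PX).
move=> C /andP [sCX depC] minC.
exists C => //; apply/circuitP; split => // D ltDC.
apply/eqP; rewrite eqn_leq rank_le_card leqNgt; apply/negP => depD.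
have := minC D; rewrite (subset_trans (proper_sub ltDC) sCX) depD => /(_ isT).
by rewrite leqNgt proper_card.
Qed.

Lemma circuit_rank C : is_circuit r C -> r C = #|C|.-1 /\ 0 < #|C|.
Proof.
case/circuitP => depC minC; have /card_gt0P [x xC] : 0 < #|C| by lia.
have := minC _ (properD1 xC); have := rank_mono (subD1set C x).
by move: depC; rewrite (cardsD1 x C) xC /=; lia.
Qed.

Lemma circuit_subset_eq C D : is_circuit r C -> is_circuit r D -> C \subset D -> C = D.
Proof.
move=> /circuitP [depC _] /circuitP [_ minD] sCD; apply/eqP.
by rewrite eqEproper sCD; apply: contraTN depC => /minD ->; rewrite ltnn.
Qed.

Lemma circuit_rankD1 C Y e : is_circuit r C -> C \subset Y -> e \in C -> r (Y :\ e) = r Y.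
Proof.
move=> cC sCY eC; have [rC _] := circuit_rank cC; have /circuitP [_ minC] := cC.
have UY : (Y :\ e) :|: C = Y.
  by rewrite -(setD1K eC) setUCA (setUidPl (setSD _ sCY)) setD1K // (subsetP sCY).
have IC : (Y :\ e) :&: C = C :\ e by rewrite setIC setIDA (setIidPl sCY).
have := rank_submod (Y :\ e) C; rewrite UY IC (minC _ (properD1 eC)) rC.
by have := rank_mono (subD1set Y e); rewrite (cardsD1 e C) eC /=; lia.
Qed.

Lemma circuit_through Y f : f \in Y -> r (Y :\ f) = r Y ->
  exists C, [/\ is_circuit r C, f \in C & C \subset Y].
Proof.
move=> fY rYf; have [B [sB indB rB]] := basis_exists (Y :\ f).
have fB : f \notin B by apply/negP => /(subsetP sB); rewrite !inE eqxx.
have sfBY : f |: B \subset Y by rewrite subUset sub1set fY (subset_trans sB) ?subD1set.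
have [|C sC cC] := @dependent_circuit (f |: B).
  by have := rank_mono sfBY; rewrite cardsU1 fB; lia.
exists C; split => //; last exact: subset_trans sC sfBY.
apply: contraT => fC; have /circuitP [depC _] := cC.
rewrite setUC in sC.
have sCB : C \subset B by rewrite (subsetU_disjoint sC) // disjoint_sym disjoints1.
by move: depC; rewrite (indep_subset sCB indB) ltnn.
Qed.

Lemma strong_circuit_elim C1 C2 e f :
    is_circuit r C1 -> is_circuit r C2 ->
    e \in C1 -> e \in C2 -> f \in C1 -> f \notin C2 ->
  exists C, [/\ is_circuit r C, f \in C & C \subset (C1 :|: C2) :\ e].
Proof.
move=> cC1 cC2 eC1 eC2 fC1 fC2; set S := C1 :|: C2.
have fe : f != e by apply: contraNneq fC2 => ->.
apply: circuit_through; first by rewrite !inE fe fC1.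
have rSf : r (S :\ f) = r S := circuit_rankD1 cC1 (subsetUl _ _) fC1.
have sC2Sf : C2 \subset S :\ f by rewrite subsetD1 subsetUr fC2.
have := circuit_rankD1 cC2 sC2Sf eC2.
have -> : (S :\ f) :\ e = (S :\ e) :\ f by rewrite !setDDl setUC.
move=> rSef.
by have := rank_mono (subD1set (S :\ e) f); have := rank_mono (subD1set S e); lia.
Qed.

Lemma circuitsU_nullity C1 C2 : is_circuit r C1 -> is_circuit r C2 -> C1 != C2 ->
  r (C1 :|: C2) + 2 <= #|C1 :|: C2|.
Proof.
move=> cC1 cC2 neC; have [rC1 C1gt0] := circuit_rank cC1; have [rC2 C2gt0] := circuit_rank cC2.
have /circuitP [_ minC1] := cC1.
have ltI : C1 :&: C2 \proper C1.
  by apply: properIl; apply: contra neC => /(circuit_subset_eq cC1 cC2) ->.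
by have := minC1 _ ltI; have := rank_submod C1 C2; have := cardsUI C1 C2; lia.
Qed.

Lemma rank_split_ge A B : [disjoint A & B] ->
    (forall C, is_circuit r C -> C \subset A :|: B -> C \subset A \/ C \subset B) ->
  r A + r B <= r (A :|: B).
Proof.
move=> dAB splitC.
have [I [sIA indI rI]] := basis_exists A; have [J [sJB indJ rJ]] := basis_exists B.
have indIJ : r (I :|: J) = #|I :|: J|.
  apply/eqP; rewrite eqn_leq rank_le_card leqNgt; apply/negP => /dependent_circuit [C sC cC].
  have /circuitP [depC _] := cC.
  have [sCA|sCB] := splitC C cC (subset_trans sC (setUSS sIA sJB)).
    have sCI := subsetU_disjoint sC (disjointW sCA sJB dAB).
    by move: depC; rewrite (indep_subset sCI indI) ltnn.
  have dBA : [disjoint B & A] by rewrite disjoint_sym.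
  rewrite setUC in sC; have sCJ := subsetU_disjoint sC (disjointW sCB sIA dBA).
  by move: depC; rewrite (indep_subset sCJ indJ) ltnn.
have := rank_mono (setUSS sIA sJB); rewrite indIJ cardsU_disjoint ?(disjointW sIA sJB) //.
by lia.
Qed.

Lemma circuit_across X Y : [disjoint X & Y] -> r (X :|: Y) < r X + r Y ->
  exists W, [/\ is_circuit r W, W \subset X :|: Y & ~~ (W \subset X)].
Proof.
move=> dXY ltXY.
case: (boolP [exists W : {set T}, [&& is_circuit r W, W \subset X :|: Y & ~~ (W \subset X)]]).
  by case/existsP => W /and3P [cW sW nWX]; exists W.
rewrite negb_exists => /forallP noW; exfalso; move: ltXY; rewrite ltnNge => /negP; apply.
by apply: rank_split_ge dXY _ => W cW sW; left; have := noW W; rewrite cW sW /= negbK.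
Qed.

Lemma skewS A B X Y : [disjoint A & B] -> r (A :|: B) = r A + r B ->
  X \subset A -> Y \subset B -> r X + r Y <= r (X :|: Y).
Proof.
move=> dAB skAB sXA sYB.
have := rank_submod A (X :|: Y); have := rank_submod (A :|: Y) B.
rewrite setUA (setUidPl sXA) -setUA (setUidPr sYB).
rewrite setIUr (setIidPr sXA) (disjoint_setI0 (disjointWr sYB dAB)) setU0.
rewrite setIUl (disjoint_setI0 dAB) set0U (setIidPl sYB).
by lia.
Qed.

Lemma skew_circuit A B C : [disjoint A & B] -> r (A :|: B) = r A + r B ->
  is_circuit r C -> C \subset A :|: B -> C \subset A \/ C \subset B.
Proof.
move=> dAB skAB cC sCAB; have /circuitP [depC minC] := cC.
case: (boolP (C \subset A)) => [|nCA]; [by left | right; apply: contraT => nCB].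
have dCAB : [disjoint C :&: A & C :&: B] := disjointW (subsetIr _ _) (subsetIr _ _) dAB.
have := skewS dAB skAB (subsetIr C A) (subsetIr C B).
rewrite -setIUr (setIidPl sCAB) (minC _ (properIl nCA)) (minC _ (properIl nCB)).
by rewrite -cardsU_disjoint // -setIUr (setIidPl sCAB); lia.
Qed.

Definition conn x y : bool :=
  (x == y) || [exists C, [&& is_circuit r C, x \in C & y \in C]].

Lemma conn_circuit C x y : is_circuit r C -> x \in C -> y \in C -> conn x y.
Proof. by move=> cC xC yC; apply/orP; right; apply/existsP; exists C; apply/and3P. Qed.

Lemma circuit_link C1 C2 x z : is_circuit r C1 -> is_circuit r C2 ->
  ~~ [disjoint C1 & C2] -> x \in C1 -> z \in C2 ->
  exists C, [/\ is_circuit r C, x \in C & z \in C].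
Proof.
move: {2}#|C1 :|: C2| (leqnn #|C1 :|: C2|) => k.
elim: k C1 C2 => [|k IH] C1 C2 leCk cC1 cC2 mC xC1 zC2.
  have : 0 < #|C1| by apply/card_gt0P; exists x.
  by have := subset_leq_card (subsetUl C1 C2); lia.
case: (boolP (z \in C1)) => [zC1|zC1]; first by exists C1.
case: (boolP (x \in C2)) => [xC2|xC2]; first by exists C2.
have /set0Pn [e /setIP [eC1 eC2]] : C1 :&: C2 != set0 by rewrite setI_eq0.
have [C3 [cC3 zC3 /subsetD1P [sC3 eC3]]] := strong_circuit_elim cC2 cC1 eC2 eC1 zC2 zC1.
rewrite setUC in sC3.
have [C4 [cC4 xC4 /subsetD1P [sC4 eC4]]] := strong_circuit_elim cC1 cC2 eC1 eC2 xC1 xC2.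
have /subsetPn [w wC3 wC2] : ~~ (C3 \subset C2).
  by apply: contra eC3 => /(circuit_subset_eq cC3 cC2) ->.
have /subsetPn [u uC4 uC1] : ~~ (C4 \subset C1).
  by apply: contra eC4 => /(circuit_subset_eq cC4 cC1) ->.
have wC1 : w \in C1 by move: (subsetP sC3 w wC3); rewrite !inE (negbTE wC2) orbF.
have uC2 : u \in C2 by move: (subsetP sC4 u uC4); rewrite !inE (negbTE uC1).
have s42 : C4 :|: C2 \subset C1 :|: C2 by rewrite subUset subsetUr andbT.
have [le42|lt42] := leqP #|C4 :|: C2| k.
  apply: IH le42 cC4 cC2 _ xC4 zC2; rewrite -setI_eq0.
  by apply/set0Pn; exists u; rewrite inE uC4.
have E : C4 :|: C2 = C1 :|: C2 by apply/eqP; rewrite eqEcard s42 (leq_trans leCk).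
have wC4 : w \in C4.
  have : w \in C4 :|: C2 by rewrite E inE wC1.
  by rewrite inE (negbTE wC2) orbF.
apply: (IH C4 C3) cC4 cC3 _ xC4 zC3.
  have sC43 : C4 :|: C3 \subset (C1 :|: C2) :\ e.
    by rewrite subsetD1 subUset sC4 sC3 /= inE negb_or eC4.
  apply: leq_trans (subset_leq_card sC43) _.
  by move: leCk; rewrite (cardsD1 e (C1 :|: C2)) inE eC1.
by rewrite -setI_eq0; apply/set0Pn; exists w; rewrite inE wC4.
Qed.

Lemma conn_trans x y z : conn x y -> conn y z -> conn x z.
Proof.
case/orP => [/eqP -> //|/existsP [C1 /and3P [cC1 xC1 yC1]]].
case/orP => [/eqP <-|/existsP [C2 /and3P [cC2 yC2 zC2]]]; first exact: conn_circuit cC1 xC1 yC1.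
have mC : ~~ [disjoint C1 & C2] by rewrite -setI_eq0; apply/set0Pn; exists y; apply/setIP.
by have [C [cC xC zC]] := circuit_link cC1 cC2 mC xC1 zC2; apply: conn_circuit cC xC zC.
Qed.

Lemma conn_class_separator x :
  r [set y | conn x y] + r (~: [set y | conn x y]) <= r [set: T].
Proof.
set A := [set y | conn x y]; rewrite -(setUCr A).
apply: rank_split_ge; first by rewrite -setI_eq0 setICr.
move=> C cC _; case: (boolP [disjoint C & A]) => [dCA|]; first by right; rewrite -disjoints_subset.
rewrite -setI_eq0 => /set0Pn [y /setIP [yC yA]]; left; apply/subsetP => z zC; rewrite inE.
by apply: conn_trans (conn_circuit cC yC zC); rewrite inE in yA.
Qed.

End Rank.

(** * Two disjoint skew largest circuits *)

Section LargestCircuits.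
Variables (T : finType) (r : {set T} -> nat).
Hypothesis hr : is_matroid_rank r.
Implicit Types (X Y S C D W Z : {set T}) (x y : T).

Lemma nullity2_circuitsU S Z1 Z2 x :
    r S + 2 = #|S| -> is_circuit r Z1 -> is_circuit r Z2 -> Z1 != Z2 ->
    Z1 \subset S -> Z2 \subset S -> x \in S -> r (S :\ x) = r S ->
  x \in Z1 :|: Z2.
Proof.
move=> nS cZ1 cZ2 neZ sZ1 sZ2 xS rSx; apply: contraT => xZ.
have sZS : Z1 :|: Z2 \subset S :\ x by rewrite subsetD1 subUset sZ1 sZ2.
have := circuitsU_nullity hr cZ1 cZ2 neZ; have := nullity_mono hr sZS.
by rewrite (cardsD1 x S) xS in nS *; lia.
Qed.

Lemma symdiff_circuit C Z :
    is_circuit r C -> is_circuit r Z -> ~~ [disjoint Z & C] -> ~~ (Z \subset C) ->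
    #|C :|: Z| <= r (C :|: Z) + 2 ->
  exists2 Z' : {set T}, is_circuit r Z' & #|Z :\: C| + #|C :\: Z| <= #|Z'|.
Proof.
move=> cC cZ mZC nZC nS.
have neCZ : C != Z by apply: contraNneq nZC => <-.
have {}nS : r (C :|: Z) + 2 = #|C :|: Z|.
  by have := circuitsU_nullity hr cC cZ neCZ; lia.
move: mZC; rewrite -setI_eq0 => /set0Pn [c /setIP [cZ' cC']].
have /subsetPn [d dZ dC] := nZC.
have [Z' [cZ'' dZ' /subsetD1P [sZ' cZ'c]]] := strong_circuit_elim hr cZ cC cZ' cC' dZ dC.
rewrite setUC in sZ'.
have neCZ' : C != Z' by apply: contraNneq cZ'c => <-.
have neZZ' : Z != Z' by apply: contraNneq cZ'c => <-.
exists Z' => //; rewrite -cardsU_disjoint; last first.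
  rewrite disjoints_subset; apply/subsetP => y; rewrite !inE => /andP [/negbTE yC _].
  by rewrite yC andbF.
apply: subset_leq_card; rewrite subUset; apply/andP; split; apply/subsetP => y /setDP [yin yout].
- have yCZ : y \in C :|: Z by rewrite inE yin orbT.
  have := nullity2_circuitsU nS cC cZ'' neCZ' (subsetUl _ _) sZ' yCZ.
  by rewrite (circuit_rankD1 hr cZ (subsetUr _ _) yin) inE (negbTE yout); apply.
- have yCZ : y \in C :|: Z by rewrite inE yin.
  have := nullity2_circuitsU nS cZ cZ'' neZZ' (subsetUr _ _) sZ' yCZ.
  by rewrite (circuit_rankD1 hr cC (subsetUl _ _) yin) inE (negbTE yout); apply.
Qed.

Lemma circuit_avoiding C Z q :
    is_circuit r C -> is_circuit r Z -> ~~ [disjoint Z & C] -> q \notin C ->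
    r (C :|: Z) + 2 < #|C :|: Z| ->
  exists W, [/\ is_circuit r W, W \subset (C :|: Z) :\ q & ~~ (W \subset C)].
Proof.
move=> cC cZ mZC qC big; set Y := (C :|: Z) :\ q.
have sCY : C \subset Y by rewrite subsetD1 subsetUl qC.
have UY : C :|: (Y :\: C) = Y by rewrite -{1}(setIidPr sCY) setID.
have dC : [disjoint C & Y :\: C] by rewrite setDE (disjointWr (subsetIr _ _)) // -subsets_disjoint.
have indYC : r (Y :\: C) = #|Y :\: C|.
  have /circuitP [_ minZ] := cZ.
  have sYC : Y :\: C \subset Z :\: C.
    apply/subsetP => y; rewrite !inE => /and3P [yC _ yCZ].
    by rewrite yC; move: yCZ; rewrite (negbTE yC).
  apply: (indep_subset hr sYC); apply: minZ; rewrite properEneq subsetDl andbT.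
  by apply: contra mZC => /eqP /setDidPl.
have [|W [cW sW nWC]] := circuit_across hr dC; last by exists W; rewrite -UY.
have [rC C0] := circuit_rank hr cC.
move: big; have := rank_mono hr (subD1set (C :|: Z) q); rewrite -/Y.
have := cardsU_disjoint dC; rewrite UY indYC (cardsD1 q (C :|: Z)) -/Y.
by case: (q \in C :|: Z) => /=; lia.
Qed.

Section MinimalCrossing.
Variables C D Z : {set T}.
Hypotheses (cC : is_circuit r C) (cD : is_circuit r D).
Hypotheses (dCD : [disjoint C & D]) (skCD : r (C :|: D) = r C + r D).
Hypotheses (cZ : is_circuit r Z) (mZC : ~~ [disjoint Z & C]) (mZD : ~~ [disjoint Z & D]).
Hypothesis minZ : forall Z', is_circuit r Z' -> ~~ [disjoint Z' & C] -> ~~ [disjoint Z' & D] ->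
  #|Z :\: (C :|: D)| <= #|Z' :\: (C :|: D)|.

(* Otherwise some circuit W of (C :|: Z) :\ q leaves C, hence also C :|: D;
   eliminating an element of W outside C :|: D between Z and W keeps q and
   yields a crossing circuit with fewer elements outside C :|: D. *)
Lemma minimal_crossing_nullity : #|C :|: Z| <= r (C :|: Z) + 2.
Proof.
rewrite leqNgt; apply/negP => big.
move: mZD; rewrite -setI_eq0 => /set0Pn [q /setIP [qZ qD]].
have qC : q \notin C by rewrite (disjointFl dCD qD).
have [W [cW /subsetD1P [sW qW] nWC]] := circuit_avoiding cC cZ mZC qC big.
have /subsetPn [p pW pCD] : ~~ (W \subset C :|: D).
  apply/negP => /(skew_circuit hr dCD skCD cW) [sWC|sWD]; first by rewrite sWC in nWC.
  by move: qW; rewrite (circuit_subset_eq cW cD sWD) qD.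
have pZ : p \in Z by move: (subsetP sW p pW) pCD; rewrite !inE; case: (p \in C).
have [Z3 [cZ3 qZ3 /subsetD1P [sZ3 pZ3]]] := strong_circuit_elim hr cZ cW pZ pW qZ qW.
have sZ3C : Z3 :\: C \subset Z.
  apply/subsetP => y /setDP [yZ3 yC]; move: (subsetP sZ3 y yZ3); rewrite inE.
  by case/orP => // /(subsetP sW); rewrite inE (negbTE yC).
have mZ3C : ~~ [disjoint Z3 & C].
  apply: contra pZ3 => /setDidPl dZ3C; rewrite dZ3C in sZ3C.
  by rewrite (circuit_subset_eq cZ3 cZ sZ3C) in pZ *.
have mZ3D : ~~ [disjoint Z3 & D] by rewrite -setI_eq0; apply/set0Pn; exists q; apply/setIP.
have sZ3out : Z3 :\: (C :|: D) \subset (Z :\: (C :|: D)) :\ p.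
  rewrite subsetD1 inE (negbTE pZ3) andbF andbT.
  apply/subsetP => y /setDP [yZ3 yCD]; rewrite inE yCD (subsetP sZ3C) // inE yZ3.
  by move: yCD; rewrite inE negb_or andbT => /andP [].
have pout : p \in Z :\: (C :|: D) by rewrite inE pCD pZ.
have := minZ cZ3 mZ3C mZ3D; rewrite leqNgt => /negP; apply.
by rewrite (cardsD1 p (Z :\: (C :|: D))) pout add1n ltnS subset_leq_card.
Qed.
End MinimalCrossing.

Lemma no_crossing_circuit C D Z0 :
    is_circuit r C -> is_circuit r D -> #|D| = #|C| ->
    (forall W, is_circuit r W -> #|W| <= #|C|) ->
    [disjoint C & D] -> r (C :|: D) = r C + r D ->
  is_circuit r Z0 -> [disjoint Z0 & C] || [disjoint Z0 & D].
Proof.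
move=> cC cD eDC maxC dCD skCD cZ0; apply: contraT; rewrite negb_or => /andP [mZ0C mZ0D].
pose crossing Z := [&& is_circuit r Z, ~~ [disjoint Z & C] & ~~ [disjoint Z & D]].
have crZ0 : crossing Z0 by apply/and3P.
case: (arg_minnP (fun Z => #|Z :\: (C :|: D)|) crZ0) => Z /and3P [cZ mZC mZD] minZ.
have minZC Z' : is_circuit r Z' -> ~~ [disjoint Z' & C] -> ~~ [disjoint Z' & D] ->
    #|Z :\: (C :|: D)| <= #|Z' :\: (C :|: D)|.
  by move=> cZ' mZ'C mZ'D; apply: minZ; apply/and3P.
have minZD Z' : is_circuit r Z' -> ~~ [disjoint Z' & D] -> ~~ [disjoint Z' & C] ->
    #|Z :\: (D :|: C)| <= #|Z' :\: (D :|: C)|.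
  by rewrite setUC => cZ' mZ'D mZ'C; apply: minZC.
have dDC : [disjoint D & C] by rewrite disjoint_sym.
have skDC : r (D :|: C) = r D + r C by rewrite setUC addnC.
have nullC := minimal_crossing_nullity cC cD dCD skCD cZ mZC mZD minZC.
have nullD := minimal_crossing_nullity cD cC dDC skDC cZ mZD mZC minZD.
have nZC : ~~ (Z \subset C) by apply: contra mZD => sZC; apply: disjointWl sZC dCD.
have nZD : ~~ (Z \subset D) by apply: contra mZC => sZD; apply: disjointWl sZD dDC.
have [Z1 cZ1 geZ1] := symdiff_circuit cC cZ mZC nZC nullC.
have [Z2 cZ2 geZ2] := symdiff_circuit cD cZ mZD nZD nullD.
have ltZCD : (Z :&: C) :|: (Z :&: D) \proper Z.
  rewrite properEneq -setIUr subsetIl andbT; apply/negP => /eqP/setIidPl sZCD.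
  by case: (skew_circuit hr dCD skCD cZ sZCD) => sZ; [rewrite sZ in nZC | rewrite sZ in nZD].
have dZCD : [disjoint Z :&: C & Z :&: D] := disjointW (subsetIr _ _) (subsetIr _ _) dCD.
have := proper_card ltZCD; rewrite (cardsU_disjoint dZCD).
have := maxC _ cZ1; have := maxC _ cZ2.
have := cardsID C Z; have := cardsID Z C; have := cardsID D Z; have := cardsID Z D.
(* |Z1|, |Z2| <= |C| = |D| give |Z| <= 2 |Z :&: C| and |Z| <= 2 |Z :&: D|. *)
rewrite (setIC C Z) (setIC D Z); move: geZ1 geZ2 eDC; clear; lia.
Qed.

End LargestCircuits.

(** * Minors and connectivity *)

Lemma circuit_loop (T : finType) (r : {set T} -> nat) C x :
  is_circuit r C -> x \in C -> r [set x] = 0 -> C = [set x].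
Proof.
move=> /circuitP [_ minC] xC rx0; apply/eqP; rewrite eq_sym eqEproper sub1set xC /=.
by apply: contraT => /negbNE /minC; rewrite rx0 cards1.
Qed.

(* Minors keep the ground set [T]: elements outside [A] become loops of the
   restriction, and elements of [S] become loops of the contraction. *)
Definition restriction (T : finType) (r : {set T} -> nat) (A : {set T}) : {set T} -> nat :=
  fun X => r (X :&: A).

Definition contraction (T : finType) (r : {set T} -> nat) (S : {set T}) : {set T} -> nat :=
  fun X => r (X :|: S) - r S.

Section Minors.
Variables (T : finType) (r : {set T} -> nat).
Hypothesis hr : is_matroid_rank r.
Implicit Types (X Y A S C D W : {set T}) (x : T).

Lemma restriction_matroid A : is_matroid_rank (restriction r A).
Proof.
rewrite /restriction; split => [X|X Y sXY|X Y] /=.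
- exact: leq_trans (rank_le_card hr _) (subset_leq_card (subsetIl X A)).
- exact: (rank_mono hr (setSI A sXY)).
- by rewrite setIUl setIIl; apply: rank_submod.
Qed.

Lemma contraction_matroid S : is_matroid_rank (contraction r S).
Proof.
rewrite /contraction; split => [X|X Y sXY|X Y] /=.
- by have := rankU_le hr X S; have := rank_le_card hr X; lia.
- by have := rank_mono hr (setSU S sXY); lia.
- have := rank_submod hr (X :|: S) (Y :|: S).
  rewrite setUACA setUid -setUIl.
  have := rank_mono hr (subsetUr (X :&: Y) S); have := rank_mono hr (subsetUr X S).
  have := rank_mono hr (subsetUr Y S); have := rank_mono hr (subsetUr (X :|: Y) S).
  by lia.
Qed.

Lemma restriction_circuit A C :
  is_circuit (restriction r A) C -> is_circuit r C \/ #|C| = 1.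
Proof.
move=> cC; case: (boolP (C \subset A)) => [sCA|/subsetPn [x xC xA]]; last first.
  right; rewrite (circuit_loop cC xC) ?cards1 // /restriction.
  by rewrite (_ : [set x] :&: A = set0) ?(rank0 hr) //; apply/eqP; rewrite setI_eq0 disjoints1.
left; move: cC => /circuitP [depC minC]; apply/circuitP.
rewrite /restriction (setIidPl sCA) in depC; split => // D ltDC.
by have := minC D ltDC; rewrite /restriction (setIidPl (subset_trans (proper_sub ltDC) sCA)).
Qed.

Lemma contraction_le S X : contraction r S X <= r X.
Proof. by rewrite /contraction; have := rankU_le hr X S; lia. Qed.

Lemma contraction_circuit_meet S D :
  is_circuit (contraction r S) D -> ~~ [disjoint D & S] -> #|D| = 1.
Proof.
move=> cD; rewrite -setI_eq0 => /set0Pn [x /setIP [xD xS]].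
rewrite (circuit_loop cD xD) ?cards1 // /contraction.
by rewrite (setUidPr _) ?subnn // sub1set.
Qed.

Lemma contraction_circuit_rankU S D :
  is_circuit (contraction r S) D -> r (D :|: S) = r S + #|D|.-1.
Proof.
case/(circuit_rank (contraction_matroid S)) => + _; rewrite /contraction.
by have := rank_mono hr (subsetUr D S); lia.
Qed.

Lemma contraction_circuit_proper S D D' :
  is_circuit (contraction r S) D -> D' \proper D -> r D' = #|D'|.
Proof.
case/circuitP => _ minD /minD.
by have := contraction_le S D'; have := rank_le_card hr D'; lia.
Qed.
End Minors.

(* Loops are ignored: only separations with two sides of positive rank are
   excluded. *)
Definition connected (T : finType) (r : {set T} -> nat) : Prop :=
  forall X : {set T}, r X + r (~: X) = r [set: T] -> r X = 0 \/ r (~: X) = 0.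

Section LargestCircuitContraction.
Variables (T : finType) (r : {set T} -> nat) (C : {set T}).
Hypotheses (hr : is_matroid_rank r) (cC : is_circuit r C).
Hypothesis maxC : forall W, is_circuit r W -> #|W| <= #|C|.
Implicit Types (X Y A D W Z : {set T}).

Lemma connected_skew_largest_circuits D : connected r ->
    is_circuit r D -> #|D| = #|C| -> [disjoint C & D] -> r (C :|: D) = r C + r D ->
  0 < r C -> 0 < r D -> False.
Proof.
move=> conn_r cD eDC dCD skCD rC_gt0 rD_gt0.
have [rC /card_gt0P [c0 c0C]] := circuit_rank hr cC.
set A := [set y | conn r c0 y].
have sCA : C \subset A by apply/subsetP => c cC'; rewrite inE (conn_circuit cC c0C cC').
case: (boolP [disjoint D & A]) => [dDA|]; last first.
  rewrite -setI_eq0 => /set0Pn [d /setIP [dD]]; rewrite inE => /orP [/eqP c0d|].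
    by move: dD; rewrite -c0d (disjointFr dCD c0C).
  case/existsP => Z /and3P [cZ c0Z dZ].
  have := no_crossing_circuit hr cC cD eDC maxC dCD skCD cZ.
  apply/negP; rewrite negb_or -!setI_eq0; apply/andP.
  by split; apply/set0Pn; [exists c0 | exists d]; apply/setIP.
rewrite disjoints_subset in dDA.
have sepA := conn_class_separator hr c0; rewrite -/A in sepA.
have := rankU_le hr A (~: A); rewrite setUCr => subA.
have := rank_mono hr sCA; have := rank_mono hr dDA.
by case: (conn_r A) => [|rA0|rA0]; lia.
Qed.

Lemma contraction_circuit_dependent D : is_circuit (contraction r C) D ->
  [disjoint C & D] -> #|C| <= #|D| -> r D < #|D|.
Proof.
move=> cD dCD leCD; rewrite ltnNge; apply/negP => geD.
have {geD} indD : r D = #|D| by have := rank_le_card hr D; lia.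
have rDC := contraction_circuit_rankU hr cD.
have [rC C0] := circuit_rank hr cC.
have [_ D0] := circuit_rank (contraction_matroid hr C) cD.
have [|W [cW sW nWC]] := circuit_across hr dCD; first by rewrite setUC rDC indD; lia.
have sDW : D \subset W.
  apply/subsetP => x xD; apply: contraT => xW.
  have neCW : C != W by apply: contraNneq nWC => <-.
  have xC : x \notin C by rewrite (disjointFl dCD xD).
  have sCW : C :|: W \subset (C :|: D) :\ x by rewrite subsetD1 subUset subsetUl sW inE negb_or xC.
  have EDx : (C :|: D) :\ x = (D :\ x) :|: C.
    by rewrite setUC setDUl (setDidPl (_ : [disjoint C & [set x]])) // disjoint_sym disjoints1.
  have /circuitP [_ minD] := cD; have := minD _ (properD1 xD); rewrite /contraction.
  have := rank_mono hr (subsetUr (D :\ x) C).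
  have := circuitsU_nullity hr cC cW neCW; have := nullity_mono hr sCW.
  have dDxC : [disjoint D :\ x & C] by rewrite (disjointWl (subD1set D x)) // disjoint_sym.
  rewrite EDx (cardsU_disjoint dDxC); have := cardsD1 x D; rewrite xD /=.
  by lia.
have neWD : W != D.
  by apply: contraTneq cW => ->; apply/negP => /circuitP [depD _]; rewrite indD ltnn in depD.
have := proper_card (_ : D \proper W); rewrite properEneq eq_sym neWD sDW.
by have := maxC cW; lia.
Qed.

Lemma contraction_largest_circuit_lt D : connected r -> 1 < #|C| ->
  is_circuit (contraction r C) D -> #|D| < #|C|.
Proof.
move=> conn_r C_gt1 cD.
case: (boolP [disjoint D & C]) => [dDC|mDC]; last by rewrite (contraction_circuit_meet cD mDC).
rewrite ltnNge; apply/negP => leCD.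
have dCD : [disjoint C & D] by rewrite disjoint_sym.
have depD := contraction_circuit_dependent cD dCD leCD.
have cDr : is_circuit r D.
  by apply/circuitP; split => // D' ltD; exact: (contraction_circuit_proper hr cD ltD).
have eDC : #|D| = #|C| by have := maxC cDr; lia.
have [rC _] := circuit_rank hr cC; have [rD _] := circuit_rank hr cDr.
apply: (connected_skew_largest_circuits conn_r cDr eDC dCD); [|lia|lia].
by rewrite setUC (contraction_circuit_rankU hr cD) rD eDC.
Qed.
End LargestCircuitContraction.

(** * Rooted trees *)

Section RootedTree.
Variables (V : finType) (root : V) (p : V -> V).
Hypothesis ht : is_rooted_tree root p.

Lemma iter_parent_root k : iter k p root = root.
Proof. by case: ht => proot _; elim: k => //= k ->. Qed.

Lemma iter_parent_rootW k K v : iter k p v = root -> k <= K -> iter K p v = root.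
Proof. by move=> vk leK; rewrite -(subnK leK) iterD vk iter_parent_root. Qed.

Lemma has_iter_root v : has (fun k => iter k p v == root) (iota 0 #|V|.+1).
Proof. by apply/hasP; exists #|V|; [rewrite mem_iota ltnSn | case: ht => _ ->]. Qed.

Lemma dist_root_le_card v : dist_root root p v <= #|V|.
Proof. by have := has_iter_root v; rewrite has_find size_iota. Qed.

Lemma dist_rootP v : iter (dist_root root p v) p v = root.
Proof.
have /(nth_find 0) := has_iter_root v.
by rewrite nth_iota ?add0n ?ltnS ?dist_root_le_card // => /eqP.
Qed.

Lemma dist_root_min v k : iter k p v = root -> dist_root root p v <= k.
Proof.
move=> vk; have [leV|ltV] := leqP k #|V|; last exact: leq_trans (dist_root_le_card v) (ltnW ltV).
by rewrite leqNgt; apply/negP => /(before_find 0); rewrite nth_iota ?add0n ?vk ?eqxx.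
Qed.

Lemma dist_root_ltn v : dist_root root p v < #|V|.
Proof.
set d := dist_root root p v.
have inj : injective (fun i : 'I_d => iter i p v).
  move=> i j eij; wlog ltij : i j eij / i < j.
    by move=> H; case: (ltngtP i j) => [/H|/(H j i (esym eij))/esym|/val_inj]; apply.
  have : iter (d - j + i) p v = root by rewrite iterD eij -iterD subnK ?dist_rootP // ltnW.
  by move/dist_root_min; have := ltn_ord j; lia.
have sub : [set iter (nat_of_ord i) p v | i : 'I_d] \subset [set~ root].
  apply/subsetP => u /imsetP [i _ ->]; rewrite !inE; apply: contraTneq (ltn_ord i).
  by move/dist_root_min; rewrite -leqNgt.
have : 0 < #|V| by apply/card_gt0P; exists root.
by have := subset_leq_card sub; rewrite card_imset // cardsC1 card_ord; lia.
Qed.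

Lemma dist_root_le_depth v : dist_root root p v <= tree_depth root p.
Proof. exact: (@leq_bigmax_cond _ xpredT (dist_root root p) v). Qed.

Lemma tree_depth_le d : (forall v, iter d p v = root) -> tree_depth root p <= d.
Proof. by move=> rootd; apply/bigmax_leqP => v _; apply: dist_root_min. Qed.

Lemma on_root_pathP u v : reflect (exists k, iter k p v = u) (on_root_path p u v).
Proof.
apply: (iffP existsP) => [[k /eqP vk]|[k vk]]; first by exists k.
have [leV|ltV] := leqP k #|V|; first by exists (Ordinal (leV : k < #|V|.+1)); rewrite /= vk.
have rV : iter #|V| p v = root by case: ht.
by exists ord_max; rewrite /= -vk rV (iter_parent_rootW rV) // ltnW.
Qed.
End RootedTree.

(* The tree obtained by hanging the tree (root2, p2) below the vertex [a] of
   the tree (root1, p1): its vertices are those of the first tree and the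
   non-root vertices of the second one, [root2] being identified with [a]. *)
Section Glue.
Variables (V1 V2 : finType) (root1 : V1) (p1 : V1 -> V1) (root2 : V2) (p2 : V2 -> V2) (a : V1).
Hypotheses (ht1 : is_rooted_tree root1 p1) (ht2 : is_rooted_tree root2 p2).

Definition glue_vertex : finType := (V1 + {w : V2 | w != root2})%type.
Definition glue_root : glue_vertex := inl root1.
Definition glue_lift (w : V2) : glue_vertex := if insub w is Some w' then inr w' else inl a.
Definition glue_parent (v : glue_vertex) : glue_vertex :=
  match v with inl v1 => inl (p1 v1) | inr w => glue_lift (p2 (val w)) end.

Lemma glue_lift_root : glue_lift root2 = inl a.
Proof. by rewrite /glue_lift insubF // eqxx. Qed.

Lemma glue_lift_inr w (w_nr : w != root2) : glue_lift w = inr (exist _ w w_nr).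
Proof. by rewrite /glue_lift insubT. Qed.

Lemma glue_lift_val w : glue_lift (val w) = inr w.
Proof. by rewrite /glue_lift valK. Qed.

Lemma glue_lift_inj : {in [pred w | w != root2] &, injective glue_lift}.
Proof. by move=> u w u_nr w_nr; rewrite (glue_lift_inr u_nr) (glue_lift_inr w_nr) => [[]]. Qed.

Lemma card_glue_vertex : #|glue_vertex| = #|V1| + #|V2|.-1.
Proof.
rewrite card_sum card_sig -(cardsC1 root2); congr (_ + _).
by apply: eq_card => w; rewrite !inE.
Qed.

Lemma iter_glue_inl k v : iter k glue_parent (inl v) = inl (iter k p1 v).
Proof. by elim: k => //= k ->. Qed.

Lemma iter_glue_lift k w :
  iter k p2 w != root2 -> iter k glue_parent (glue_lift w) = glue_lift (iter k p2 w).
Proof.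
elim: k => //= k IH nr_k.
have nr_k' : iter k p2 w != root2.
  by apply: contra nr_k => /eqP ->; case: ht2 => -> _.
by rewrite IH // (glue_lift_inr nr_k').
Qed.

Lemma iter_glue_lift_a k w : iter k p2 w = root2 ->
  exists2 k', k' <= k & iter k' glue_parent (glue_lift w) = inl a.
Proof.
elim: k w => [|k IH] w wk; first by exists 0 => //; move: wk => /= ->; rewrite glue_lift_root.
have [->|w_nr] := eqVneq w root2; first by exists 0 => //; rewrite glue_lift_root.
rewrite iterSr in wk; have [k' lek' wk'] := IH _ wk.
by exists k'.+1 => //; rewrite iterSr /= (glue_lift_inr w_nr).
Qed.

Lemma glue_lift_reaches_root w : exists2 k,
    k <= dist_root root2 p2 w + dist_root root1 p1 a &
  iter k glue_parent (glue_lift w) = glue_root.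
Proof.
have [k lek wk] := iter_glue_lift_a (dist_rootP ht2 w).
exists (dist_root root1 p1 a + k); first by rewrite addnC leq_add2r.
by rewrite iterD wk iter_glue_inl (dist_rootP ht1).
Qed.

Lemma glue_tree : is_rooted_tree glue_root glue_parent.
Proof.
split; first by case: ht1 => /= ->.
have iter_glue_root k : iter k glue_parent glue_root = glue_root.
  by rewrite iter_glue_inl (iter_parent_root ht1).
case=> [v|w]; rewrite card_glue_vertex.
  rewrite iter_glue_inl (iter_parent_rootW ht1 (dist_rootP ht1 v)) //.
  by have := dist_root_ltn ht1 v; lia.
have [k lek wk] := glue_lift_reaches_root (val w); rewrite glue_lift_val in wk.
have lek' : k <= #|V1| + #|V2|.-1.
  by have := dist_root_ltn ht2 (val w); have := dist_root_ltn ht1 a; lia.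
by rewrite -(subnK lek') iterD wk iter_glue_root.
Qed.

Lemma glue_depth : tree_depth glue_root glue_parent <=
  maxn (tree_depth root1 p1) (dist_root root1 p1 a + tree_depth root2 p2).
Proof.
apply/bigmax_leqP => [[v|w]] _.
  apply: leq_trans (leq_maxl _ _); apply: leq_trans _ (dist_root_le_depth root1 p1 v).
  by apply: (dist_root_min glue_tree); rewrite iter_glue_inl (dist_rootP ht1).
apply: leq_trans (leq_maxr _ _); rewrite -glue_lift_val.
have [k lek wk] := glue_lift_reaches_root (val w).
apply: leq_trans (dist_root_min glue_tree wk) (leq_trans lek _).
by rewrite addnC leq_add2l dist_root_le_depth.
Qed.

Lemma glue_path_inl u v : on_root_path p1 u v -> on_root_path glue_parent (inl u) (inl v).
Proof.
case/(on_root_pathP ht1) => k vk; apply/(on_root_pathP glue_tree).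
by exists k; rewrite iter_glue_inl vk.
Qed.

Lemma glue_path_lift u w : u != root2 -> on_root_path p2 u w ->
  on_root_path glue_parent (glue_lift u) (glue_lift w).
Proof.
move=> u_nr /(on_root_pathP ht2) [k wk]; apply/(on_root_pathP glue_tree).
by exists k; rewrite iter_glue_lift wk.
Qed.

Lemma glue_path_a u w : on_root_path p1 u a -> on_root_path glue_parent (inl u) (glue_lift w).
Proof.
case/(on_root_pathP ht1) => k ak; apply/(on_root_pathP glue_tree).
have [k' _ wk'] := iter_glue_lift_a (dist_rootP ht2 w).
by exists (k + k'); rewrite iterD wk' iter_glue_inl ak.
Qed.
End Glue.

(** * Depth-decompositions *)

Definition Tstar_set (T V : finType) (root : V) (parent : V -> V) (f : T -> V)
    (X : {set T}) : {set V} :=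
  [set u | (u != root) && [exists x in X, on_root_path parent u (f x)]].

Lemma mem_Tstar_set (T V : finType) (root : V) (parent : V -> V) (f : T -> V) (X : {set T}) u x :
  x \in X -> u != root -> on_root_path parent u (f x) -> u \in Tstar_set root parent f X.
Proof. by move=> xX u_nr ux; rewrite inE u_nr; apply/existsP; exists x; rewrite xX. Qed.

Lemma Tstar_edgesE (T V : finType) (root : V) (parent : V -> V) (f : T -> V) (X : {set T}) :
  Tstar_edges root parent f X = #|Tstar_set root parent f X|.
Proof. by []. Qed.

Lemma Tstar_edges_glue (T V1 V2 : finType) (root1 : V1) (p1 : V1 -> V1)
    (root2 : V2) (p2 : V2 -> V2) (a : V1) (g : T -> glue_vertex V1 root2)
    (X : {set T}) (U1 : {set V1}) (U2 : {set V2}) :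
    root2 \notin U2 ->
    (inl @: U1) :|: (glue_lift root2 a @: U2)
      \subset Tstar_set (glue_root root1 root2) (glue_parent p1 p2 a) g X ->
  #|U1| + #|U2| <= Tstar_edges (glue_root root1 root2) (glue_parent p1 p2 a) g X.
Proof.
move=> nrU2 sub; apply: leq_trans (subset_leq_card sub).
have U2_nr : {subset U2 <= [pred w | w != root2]}.
  by move=> w wU2; rewrite inE; apply: contraNneq nrU2 => <-.
have dU : [disjoint inl @: U1 & glue_lift root2 a @: U2].
  rewrite -setI_eq0; apply/eqP/setP => u; rewrite !inE; apply/negP.
  case/andP => /imsetP [v _ ->] /imsetP [w /U2_nr w_nr].
  by rewrite (glue_lift_inr a w_nr).
rewrite (cardsU_disjoint dU) card_imset; last by move=> ? ? [].
by rewrite card_in_imset // => u w /U2_nr u_nr /U2_nr w_nr; apply: glue_lift_inj.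
Qed.

Section PathTree.
Variable s : nat.

Definition path_parent (i : 'I_s.+1) : 'I_s.+1 := inord i.-1.

Lemma iter_path_parent k (i : 'I_s.+1) : iter k path_parent i = inord (i - k).
Proof.
elim: k => [|k IH] /=; first by rewrite subn0 inord_val.
by rewrite IH /path_parent inordK ?subnS //; have := ltn_ord i; lia.
Qed.

Lemma iter_path_parent_s (i : 'I_s.+1) : iter s path_parent i = ord0.
Proof.
rewrite iter_path_parent (_ : i - s = 0); last by have := ltn_ord i; lia.
by apply: val_inj; rewrite /= inordK.
Qed.

Lemma path_tree : is_rooted_tree ord0 path_parent.
Proof.
split => [|i]; first by apply: val_inj; rewrite /= inordK.
by rewrite card_ord iterS iter_path_parent_s; apply: val_inj; rewrite /= inordK.
Qed.

Lemma path_depth : tree_depth ord0 path_parent <= s.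
Proof. exact: (tree_depth_le path_tree iter_path_parent_s). Qed.

Lemma path_on_root_path (j : 'I_s.+1) : on_root_path path_parent j ord_max.
Proof.
apply/(on_root_pathP path_tree); exists (s - j); rewrite iter_path_parent /=.
by rewrite (_ : s - (s - j) = j) ?inord_val //; have := ltn_ord j; lia.
Qed.
End PathTree.

Section BranchDepth.
Variables (T : finType) (r : {set T} -> nat).
Hypothesis hr : is_matroid_rank r.

Lemma branch_depth_leW d d' : d <= d' -> branch_depth_le r d -> branch_depth_le r d'.
Proof.
move=> le_dd' [V [root [p [f [dec_f dep_f]]]]].
by exists V, root, p, f; split; last exact: leq_trans le_dd'.
Qed.

Lemma branch_depth_rank0 : r [set: T] = 0 -> branch_depth_le r 0.
Proof.
move=> rT0; have ht : is_rooted_tree tt id by split => // [[]]; elim: #|_| => //=.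
exists unit, tt, id, (fun=> tt); split; last by apply: (tree_depth_le ht) => -[].
split => // [|X]; first by rewrite rT0 /tree_edges card_unit.
by have := rank_mono hr (subsetT X); rewrite rT0 leqn0 => /eqP ->.
Qed.

Lemma branch_depth_separation A d : r A + r (~: A) = r [set: T] ->
    branch_depth_le (restriction r A) d -> branch_depth_le (restriction r (~: A)) d ->
  branch_depth_le r d.
Proof.
move=> sepA [V1 [root1 [p1 [f1 [[ht1 e1 h1] dep1]]]]] [V2 [root2 [p2 [f2 [[ht2 e2 h2] dep2]]]]].
pose f x := if x \in A then inl (f1 x) else glue_lift root2 root1 (f2 x).
exists (glue_vertex V1 root2), (glue_root root1 root2), (glue_parent p1 p2 root1), f.
split; last first.
  apply: leq_trans (glue_depth root1 ht1 ht2) _.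
  have d0 : dist_root root1 p1 root1 = 0 by apply/eqP; rewrite -leqn0 (dist_root_min ht1).
  by rewrite d0 geq_max dep1 dep2.
split; first exact: glue_tree.
  move: e1 e2; rewrite /tree_edges card_glue_vertex /restriction !setTI.
  have : 0 < #|V1| by apply/card_gt0P; exists root1.
  have : 0 < #|V2| by apply/card_gt0P; exists root2.
  by lia.
move=> X; set X1 := X :&: A; set X2 := X :&: ~: A.
have := rankU_le hr X1 X2; rewrite -setIUr setUCr setIT.
have := h1 X1; have := h2 X2; rewrite /restriction -!setIA !setIid -/X1 -/X2.
have nr2 : root2 \notin Tstar_set root2 p2 f2 X2 by rewrite inE eqxx.
have sub : (inl @: Tstar_set root1 p1 f1 X1) :|: (glue_lift root2 root1 @: Tstar_set root2 p2 f2 X2)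
    \subset Tstar_set (glue_root root1 root2) (glue_parent p1 p2 root1) f X.
  rewrite subUset; apply/andP; split; apply/subsetP => v /imsetP [u];
    rewrite inE => /andP [u_nr /exists_inP [x /setIP [xX xA] ux]] ->.
  - apply: (mem_Tstar_set xX); first by apply: contra u_nr => /eqP [->].
    by rewrite /f xA; exact: (glue_path_inl root1 ht1 ht2 ux).
  - apply: (mem_Tstar_set xX); first by rewrite (glue_lift_inr root1 u_nr).
    rewrite /f; move: xA; rewrite inE => /negbTE ->.
    exact: (glue_path_lift root1 ht1 ht2 u_nr ux).
by have := Tstar_edges_glue nr2 sub; rewrite -!Tstar_edgesE; lia.
Qed.

Lemma branch_depth_contraction S d :
  branch_depth_le (contraction r S) d -> branch_depth_le r (r S + d).
Proof.
case=> V2 [root2 [p2 [f2 [[ht2 e2 h2] dep2]]]].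
set s := r S; have ht1 := path_tree s.
pose f x := glue_lift root2 (ord_max : 'I_s.+1) (f2 x).
exists (glue_vertex 'I_s.+1 root2), (glue_root ord0 root2).
exists (glue_parent (@path_parent s) p2 ord_max), f.
split; last first.
  apply: leq_trans (glue_depth ord_max ht1 ht2) _.
  rewrite geq_max (leq_trans (path_depth s)) ?leq_addr ?leq_add //.
  exact: leq_trans (dist_root_le_depth _ _ _) (path_depth s).
split; first exact: glue_tree.
  move: e2; rewrite /tree_edges card_glue_vertex card_ord /contraction /= setTU.
  have : 0 < #|V2| by apply/card_gt0P; exists root2.
  by have := rank_mono hr (subsetT S); rewrite -/s; lia.
move=> X; case: (set_0Vmem X) => [->|[x0 x0X]]; first by rewrite (rank0 hr).
have nr2 : root2 \notin Tstar_set root2 p2 f2 X by rewrite inE eqxx.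
have sub : (inl @: [set~ ord0]) :|: (glue_lift root2 ord_max @: Tstar_set root2 p2 f2 X)
    \subset Tstar_set (glue_root ord0 root2) (glue_parent (@path_parent s) p2 ord_max) f X.
  rewrite subUset; apply/andP; split; apply/subsetP => v /imsetP [u].
    rewrite in_setC1 => u_nr ->; apply: (mem_Tstar_set x0X).
      by apply: contra u_nr => /eqP [->].
    exact: (glue_path_a ht1 ht2 _ (path_on_root_path u)).
  rewrite inE => /andP [u_nr /exists_inP [x xX ux]] ->; apply: (mem_Tstar_set xX).
    by rewrite (glue_lift_inr ord_max u_nr).
  exact: (glue_path_lift ord_max ht1 ht2 u_nr ux).
apply: (leq_trans _ (Tstar_edges_glue nr2 sub)); rewrite cardsC1 card_ord /=.
have := h2 X; rewrite /contraction /= -/s -Tstar_edgesE.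
by have := rank_mono hr (subsetUl X S); lia.
Qed.
End BranchDepth.

(** * The bound *)

Definition circuits_le (T : finType) (r : {set T} -> nat) (l : nat) : Prop :=
  forall C : {set T}, is_circuit r C -> #|C| <= l.

Section Bound.
Variables (T : finType) (r : {set T} -> nat).
Hypothesis hr : is_matroid_rank r.

Lemma restriction_circuits_le A l : 0 < l -> circuits_le r l -> circuits_le (restriction r A) l.
Proof. by move=> l_gt0 le_r C /(restriction_circuit hr) [/le_r|->]. Qed.

Lemma connected_rank_le1 : connected r -> circuits_le r 1 -> r [set: T] <= 1.
Proof.
move=> conn_r loops; have [B [_ indB rB]] := basis_exists hr [set: T].
have [B0|/card_gt0P [e eB]] := posnP #|B|; first by rewrite -rB indB B0.
have re : r [set e] = 1 by rewrite (indep_subset hr _ indB) ?cards1 ?sub1set.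
have := rankU_le hr [set e] (~: [set e]); rewrite setUCr => subT.
have : r [set e] + r (~: [set e]) <= r [set: T].
  rewrite -(setUCr [set e]); apply: (rank_split_ge hr); first by rewrite -setI_eq0 setICr.
  move=> C cC _; have /cards1P [c ->] : #|C| == 1.
    by rewrite eqn_leq loops //; have [_] := circuit_rank hr cC.
  by case: (eqVneq c e) => [->|nce]; [left | right; rewrite sub1set !inE].
by move=> sepT; case: (conn_r [set e]) => [|h|h]; lia.
Qed.

Lemma branch_depth_connected l : connected r -> 0 < l -> circuits_le r l ->
    (forall l', 0 < l' < l -> forall r' : {set T} -> nat,
       is_matroid_rank r' -> circuits_le r' l' -> branch_depth_le r' (l' ^ 2)) ->
  branch_depth_le r (l ^ 2).
Proof.
move=> conn_r l_gt0 le_l IHl.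
case: (boolP [exists C : {set T}, is_circuit r C && (1 < #|C|)]); last first.
  rewrite negb_exists => /forallP small.
  have le1 : circuits_le r 1 by move=> C cC; rewrite leqNgt; have := small C; rewrite cC.
  have rT0 : contraction r [set: T] [set: T] = 0 by rewrite /contraction setUid subnn.
  have bdT := branch_depth_contraction hr (branch_depth_rank0 (contraction_matroid hr _) rT0).
  apply: branch_depth_leW bdT; rewrite addn0.
  by apply: leq_trans (connected_rank_le1 conn_r le1) _; rewrite expn_gt0 l_gt0.
case/existsP => C0 /andP [cC0 C0_gt1].
have [C cC maxC] := @arg_maxnP _ C0 (is_circuit r) (fun C => #|C|) cC0.
have C_gt1 : 1 < #|C| := leq_trans C0_gt1 (maxC _ cC0).
have le_C := le_l _ cC; have [rC _] := circuit_rank hr cC.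
have le_contr : circuits_le (contraction r C) #|C|.-1.
  by move=> D cD; have := contraction_largest_circuit_lt hr cC maxC conn_r C_gt1 cD; lia.
have bd_contr : branch_depth_le (contraction r C) (#|C|.-1 ^ 2).
  by apply: IHl (contraction_matroid hr C) le_contr; lia.
apply: branch_depth_leW (branch_depth_contraction hr bd_contr); rewrite rC.
by nia.
Qed.
End Bound.

Lemma branch_depth_le_sq (T : finType) l : 0 < l -> forall r : {set T} -> nat,
  is_matroid_rank r -> circuits_le r l -> branch_depth_le r (l ^ 2).
Proof.
elim/ltn_ind: l => l IHl l_gt0 r hr le_l.
move: {2}(r [set: T]) (leqnn (r [set: T])) => k; elim: k r hr le_l => [|k IHk] r hr le_l le_rk.
  by apply: branch_depth_leW (branch_depth_rank0 hr _) => //; lia.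
case: (boolP [exists X : {set T}, [&& 0 < r X, 0 < r (~: X) & r X + r (~: X) == r [set: T]]]).
  case/existsP => X /and3P [rX_gt0 rXc_gt0 /eqP sepX].
  have bd_res A : r A <= k -> branch_depth_le (restriction r A) (l ^ 2).
    move=> le_Ak; apply: IHk; first exact: restriction_matroid.
      exact: restriction_circuits_le.
    by rewrite /restriction /= setTI.
  by apply: (branch_depth_separation hr sepX); apply: bd_res; lia.
rewrite negb_exists => /forallP noSep.
apply: branch_depth_connected => // [X sepX|l' /andP [l'_gt0 lt_l']]; last exact: IHl.
by have := noSep X; rewrite sepX eqxx andbT negb_and -!leqNgt !leqn0 => /orP [] /eqP; [left|right].
Qed.

Theorem mainTheorem16 (T : finType) (r : {set T} -> nat) :
  is_matroid_rank r ->
  (exists C : {set T}, is_circuit r C) ->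
  branch_depth_le r (max_circuit_size r ^ 2).
Proof.
move=> hr [C0 cC0].
have le_max : circuits_le r (max_circuit_size r).
  by move=> C cC; apply: (@leq_bigmax_cond _ (is_circuit r) (fun C => #|C|)).
have [_ C0_gt0] := circuit_rank hr cC0.
exact: (branch_depth_le_sq (leq_trans C0_gt0 (le_max _ cC0)) hr le_max).
Qed.
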